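(* Let $A$ be a noetherian ring and let $E$ be a finitely generated $A$-module. For each prime ideal $\mathfrak{p} \subset A$, let a submodule $J(\mathfrak{p}) \subset E_{\mathfrak{p}}$ be given. There exists a submodule $F\subset E$ such that $F_{\mathfrak{p}} = J(\mathfrak{p})$ for all primes $\mathfrak{p}\subset A$ if and only if both of the following conditions hold: (Consistency) For all primes $\mathfrak{p} \subset \mathfrak{q} \subset A$, we have $J(\mathfrak{p}) = J(\mathfrak{q})_{\mathfrak{p} A_{\mathfrak{q}}} = A_{\mathfrak{p}}\otimes_{A_{\mathfrak{q}}} J(\mathfrak{q})$ as submodules of $E_{\mathfrak{p}}$. (Finiteness) The set $\mathfrak{A}$ of all primes $\mathfrak{p}\subset A$ for which $\mathfrak{p} A_{\mathfrak{p}}$ is an associated prime of the $A_{\mathfrak{p}}$-module $E_{\mathfrak{p}}/J(\mathfrak{p})$ is finite. Moreover, when such $F$ exists it is unique, and $\mathrm{Ass}_A(E/F) = \mathfrak{A}$.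
   Context: For primes $\mathfrak{p}\subset\mathfrak{q}$, $E_{\mathfrak{p}}$ is identified with the localization of the $A_{\mathfrak{q}}$-module $E_{\mathfrak{q}}$ at $\mathfrak{p}A_{\mathfrak{q}}$, and $J(\mathfrak{q})_{\mathfrak{p}A_{\mathfrak{q}}}$ denotes the localization of $J(\mathfrak{q})$, viewed as a submodule of $E_{\mathfrak{p}}$. $\mathrm{Ass}_A(M)$ denotes the set of associated primes of an $A$-module $M$. *)

From mathcomp Require Import all_boot all_order all_algebra.
Set Implicit Arguments. Unset Strict Implicit. Unset Printing Implicit Defensive.
Import GRing.Theory.
Local Open Scope ring_scope.

Section CommAlg.
Variables (A : comNzRingType) (E : lmodType A).

Definition is_ideal (I : A -> Prop) : Prop :=
  I 0 /\ (forall x y, I x -> I y -> I (x + y)) /\ (forall a y, I y -> I (a * y)).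

Definition is_prime (P : A -> Prop) : Prop :=
  is_ideal P /\ ~ P 1 /\ (forall a b, P (a * b) -> P a \/ P b).

Definition noetherian : Prop :=
  forall I : A -> Prop, is_ideal I ->
    exists (n : nat) (g : 'I_n -> A),
      forall x, I x <-> exists c : 'I_n -> A, x = \sum_(i < n) c i * g i.

Definition fin_gen : Prop :=
  exists (n : nat) (g : 'I_n -> E),
    forall x : E, exists c : 'I_n -> A, x = \sum_(i < n) c i *: g i.

Definition is_submod (F : E -> Prop) : Prop :=
  F 0 /\ (forall x y, F x -> F y -> F (x + y)) /\ (forall a x, F x -> F (a *: x)).

(** Localization E_p: an element is a fraction e/s with s outside p;
    e/s = e'/s' iff t (s' e - s e') = 0 for some t outside p. *)
Definition fr_eq (p : A -> Prop) (e : E) (s : A) (e' : E) (s' : A) : Prop :=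
  exists t, ~ p t /\ t *: (s' *: e - s *: e') = 0.

(** A submodule of the A_p-module E_p, represented as the set of all
    fractions (e, s) (s outside p) representing one of its elements. *)
Definition is_locsub (p : A -> Prop) (J : E -> A -> Prop) : Prop :=
  (forall e s, J e s -> ~ p s) /\
  (forall e s e' s', J e s -> ~ p s' -> fr_eq p e s e' s' -> J e' s') /\
  J 0 1 /\
  (forall e s e' s', J e s -> J e' s' -> J (s' *: e + s *: e') (s * s')) /\
  (forall a t e s, ~ p t -> J e s -> J (a *: e) (t * s)).

Definition loc (p : A -> Prop) (F : E -> Prop) (e : E) (s : A) : Prop :=
  ~ p s /\ exists f u, F f /\ ~ p u /\ fr_eq p e s f u.

(** For p ⊆ q, J(q)_{pA_q} viewed inside E_p = (E_q)_{pA_q}: the elements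
    (e'/s') / (t/u) = (u e')/(s' t) with e'/s' in J(q), t ∉ p, u ∉ q. *)
Definition relloc (p q : A -> Prop) (Jq : E -> A -> Prop) (e : E) (s : A) : Prop :=
  ~ p s /\ exists e' s' t u, Jq e' s' /\ ~ p t /\ ~ q u /\
     fr_eq p e s (u *: e') (s' * t).

(** a/t ∈ pA_p (as an element of A_p). *)
Definition in_pAp (p : A -> Prop) (a t : A) : Prop :=
  exists b u, p b /\ ~ p u /\ exists v, ~ p v /\ v * (a * u - b * t) = 0.

(** p A_p is an associated prime of the A_p-module E_p / J(p):
    some x = e/s in E_p has annihilator (mod J(p)) equal to pA_p. *)
Definition locally_assoc (p : A -> Prop) (Jp : E -> A -> Prop) : Prop :=
  exists e s, ~ p s /\
    forall a t, ~ p t -> (Jp (a *: e) (t * s) <-> in_pAp p a t).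

Definition frakA (J : (A -> Prop) -> E -> A -> Prop) (p : A -> Prop) : Prop :=
  is_prime p /\ locally_assoc p (J p).

Definition assoc_quot (F : E -> Prop) (P : A -> Prop) : Prop :=
  is_prime P /\ exists e : E, forall a, F (a *: e) <-> P a.

Definition finite_primes (S : (A -> Prop) -> Prop) : Prop :=
  exists (n : nat) (L : nat -> A -> Prop),
    forall P, S P -> exists i, (i < n)%N /\ forall x, P x <-> L i x.

Definition realizes (J : (A -> Prop) -> E -> A -> Prop) (F : E -> Prop) : Prop :=
  is_submod F /\ forall p, is_prime p -> forall e s, loc p F e s <-> J p e s.

Definition consistency (J : (A -> Prop) -> E -> A -> Prop) : Prop :=
  forall p q, is_prime p -> is_prime q -> (forall x, p x -> q x) ->
    forall e s, J p e s <-> relloc p q (J q) e s.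

End CommAlg.

(* If F realizes J, then J(p) ∩ E is the saturation of F at p.  This gives consistency,
   identifies 𝔄 with Ass(E/F) -- which is finite for a finitely generated module over a
   noetherian ring: filter E/F by cyclic modules A/I and use noetherian induction on I -- and
   gives uniqueness, since an element of F outside F' has a multiple whose annihilator modulo F'
   is a prime at which the localizations of F and F' differ.
   Conversely, let F be the set of z with z/1 ∈ J(q) for all q.  Given z/1 ∈ J(p) we need t ∉ p
   with tz/1 ∈ J(q) for every q.  If tz/1 ∉ J(q), consistency puts a prime annihilator of a
   multiple of tz modulo J(q) ∩ E in 𝔄 below q, so only the finitely many Q ∈ 𝔄 matter.  For
   each of them the associated primes of z modulo J(Q) ∩ E lie in 𝔄 and not inside p, so some
   c ∉ p lies in all of them, and by the ascending chain condition a power of c brings z into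
   J(Q) ∩ E. *)

From mathcomp Require Import all_boot all_order all_algebra.
From mathcomp Require Import ring.
From Stdlib Require Import Classical ClassicalEpsilon FunctionalExtensionality PropExtensionality.
Set Implicit Arguments. Unset Strict Implicit. Unset Printing Implicit Defensive.
Import GRing.Theory.
Local Open Scope ring_scope.

Section Ideals.
Variable A : comNzRingType.
Implicit Types (I P : A -> Prop) (a b x y : A).

Lemma is_idealD I x y : is_ideal I -> I x -> I y -> I (x + y).
Proof. by move=> [_ [hD _]]; apply: hD. Qed.

Lemma is_idealM I a x : is_ideal I -> I x -> I (a * x).
Proof. by move=> [_ [_ hM]]; apply: hM. Qed.

Lemma is_idealMr I a x : is_ideal I -> I x -> I (x * a).
Proof. by move=> hI hx; rewrite mulrC; apply: is_idealM. Qed.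

Lemma is_ideal_sum I (T : Type) (r : seq T) (Q : pred T) (F : T -> A) :
  is_ideal I -> (forall i, Q i -> I (F i)) -> I (\sum_(i <- r | Q i) F i).
Proof. by move=> [h0 [hD _]] hF; apply: (big_ind I h0 hD). Qed.

Lemma is_ideal_gen I n (g : 'I_n -> A) :
  (forall x, I x <-> exists c : 'I_n -> A, x = \sum_(i < n) c i * g i) ->
  forall i, I (g i).
Proof.
move=> hg i; apply/hg; exists (fun j => (j == i)%:R).
by rewrite (bigD1 i) //= eqxx mul1r big1 ?addr0 // => j /negbTE ->; rewrite mul0r.
Qed.

Lemma prime_notin1 P : is_prime P -> ~ P 1.
Proof. by case=> _ []. Qed.

Lemma prime_notinM P a b : is_prime P -> ~ P a -> ~ P b -> ~ P (a * b).
Proof. by move=> [_ [_ hp]] ha hb /hp []. Qed.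

Lemma prime_notin_prod P (T : Type) (r : seq T) (Q : pred T) (F : T -> A) :
  is_prime P -> (forall i, Q i -> ~ P (F i)) -> ~ P (\prod_(i <- r | Q i) F i).
Proof.
move=> hP hF; apply: (big_ind (fun x => ~ P x)) => //; first exact: prime_notin1.
by move=> x y; apply: prime_notinM.
Qed.

Lemma prime_notinX P a k : is_prime P -> ~ P a -> ~ P (a ^+ k).
Proof.
move=> hP ha; elim: k => [|k IH]; first by rewrite expr0; apply: prime_notin1.
by rewrite exprS; apply: prime_notinM.
Qed.

(* Pick in each [K i] not inside [p] an element outside [p]; take the product. *)
Lemma common_notin_prime p n (K : 'I_n -> A -> Prop) : is_prime p ->
  exists c, ~ p c /\
    forall i, is_ideal (K i) -> ~ (forall a, K i a -> p a) -> K i c.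
Proof.
move=> hp.
have hch i : exists a, ~ p a /\ (~ (forall a, K i a -> p a) -> K i a).
  case: (classic (exists a, K i a /\ ~ p a)) => [[a [hKa hpa]]|hno].
    by exists a.
  exists 1; split; first exact: prime_notin1.
  by move=> hsub; exfalso; apply: hsub => a hKa; apply: NNPP => hpa; apply: hno; exists a.
pose a i := proj1_sig (constructive_indefinite_description _ (hch i)).
have ha i : ~ p (a i) /\ (~ (forall x, K i x -> p x) -> K i (a i)) :=
  proj2_sig (constructive_indefinite_description _ (hch i)).
exists (\prod_(i < n) a i); split.
  by apply: prime_notin_prod => // i _; apply: (ha i).1.
by move=> i hKi hnot; rewrite (bigD1 i) //=; apply: is_idealMr => //; apply: (ha i).2.
Qed.

Lemma noetherian_acc : noetherian A -> forall I : nat -> A -> Prop,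
  (forall k, is_ideal (I k)) -> (forall k x, I k x -> I k.+1 x) ->
  exists k, forall x, I k.+1 x -> I k x.
Proof.
move=> hN I hI hinc.
have mono k m : (k <= m)%N -> forall x, I k x -> I m x.
  move=> /subnK <-; elim: (m - k)%N => // d IH x /IH /hinc.
  by rewrite addSn.
pose U x := exists k, I k x.
have hU : is_ideal U.
  split; first by exists 0%N; case: (hI 0%N).
  split=> [x y [k hx] [m hy]|a y [k hy]]; last by exists k; apply: is_idealM.
  exists (maxn k m); apply: is_idealD; first exact: hI.
    exact: mono (leq_maxl k m) _ hx.
  exact: mono (leq_maxr k m) _ hy.
have [n [g hg]] := hN U hU.
pose kg i := proj1_sig (constructive_indefinite_description _ (is_ideal_gen hg i)).
have hkg i : I (kg i) (g i) :=
  proj2_sig (constructive_indefinite_description _ (is_ideal_gen hg i)).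
exists (\max_(i < n) kg i)%N => x hx.
have /hg [c ->] : U x by exists (\max_(i < n) kg i).+1%N.
apply: is_ideal_sum => // i _; apply: is_idealM => //.
by apply: mono (hkg i); apply: leq_bigmax.
Qed.

Lemma noetherian_maximal : noetherian A ->
  forall (T : Type) (K : T -> A -> Prop), (forall t, is_ideal (K t)) -> T ->
  exists t, forall t', (forall x, K t x -> K t' x) -> forall x, K t' x -> K t x.
Proof.
move=> hN T K hK t0; apply: NNPP => hno.
have hstep t : exists t', (forall x, K t x -> K t' x) /\ exists x, K t' x /\ ~ K t x.
  apply: NNPP => h; apply: hno; exists t => t' h1 x h2.
  by apply: NNPP => h3; apply: h; exists t'; split => //; exists x.
pose f t := proj1_sig (constructive_indefinite_description _ (hstep t)).
have hf t : (forall x, K t x -> K (f t) x) /\ exists x, K (f t) x /\ ~ K t x :=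
  proj2_sig (constructive_indefinite_description _ (hstep t)).
have [k hk] := noetherian_acc hN (I := fun k => K (iter k f t0))
  (fun k => hK _) (fun k x => (hf (iter k f t0)).1 x).
have [_ [x [hx1 hx2]]] := hf (iter k f t0).
exact: hx2 (hk x hx1).
Qed.

End Ideals.

Section Submodules.
Variables (A : comNzRingType) (M : lmodType A).
Implicit Types (G H : M -> Prop) (x y : M).

Lemma is_submod0 G : is_submod G -> G 0.
Proof. by case. Qed.

Lemma is_submodD G x y : is_submod G -> G x -> G y -> G (x + y).
Proof. by move=> [_ [hD _]]; apply: hD. Qed.

Lemma is_submodZ G a x : is_submod G -> G x -> G (a *: x).
Proof. by move=> [_ [_ hZ]]; apply: hZ. Qed.

Lemma is_submodB G x y : is_submod G -> G x -> G y -> G (x - y).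
Proof. by move=> hG hx hy; rewrite -scaleN1r; apply: is_submodD => //; apply: is_submodZ. Qed.

Lemma is_submod_sum G (T : Type) (r : seq T) (Q : pred T) (F : T -> M) :
  is_submod G -> (forall i, Q i -> G (F i)) -> G (\sum_(i <- r | Q i) F i).
Proof. by move=> [h0 [hD _]] hF; apply: (big_ind G h0 hD). Qed.

Lemma is_submod_impl (Q : Prop) (G : M -> Prop) :
  (Q -> is_submod G) -> is_submod (fun z => Q -> G z).
Proof.
move=> hG; split=> [/hG /is_submod0 //|].
split=> [x y hx hy hQ|a x hx hQ]; first exact: is_submodD (hG hQ) (hx hQ) (hy hQ).
exact: (is_submodZ a (hG hQ) (hx hQ)).
Qed.

Lemma is_submod_bigcap (I : Type) (Q : I -> Prop) (G : I -> M -> Prop) :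
  (forall i, Q i -> is_submod (G i)) -> is_submod (fun z => forall i, Q i -> G i z).
Proof.
move=> hG; split=> [i /hG /is_submod0 //|].
split=> [x y hx hy i hi|a x hx i hi]; first exact: is_submodD (hG i hi) (hx i hi) (hy i hi).
exact: (is_submodZ a (hG i hi) (hx i hi)).
Qed.

Definition ann G x (a : A) : Prop := G (a *: x).

Lemma ann_ideal G x : is_submod G -> is_ideal (ann G x).
Proof.
move=> hG; split; first by rewrite /ann scale0r; apply: is_submod0.
split=> [a b ha hb|a b hb]; rewrite /ann; first by rewrite scalerDl; apply: is_submodD.
by rewrite -scalerA; apply: is_submodZ.
Qed.

Lemma annZ G a b x : ann G (b *: x) a = ann G x (a * b).
Proof. by rewrite /ann scalerA. Qed.

(* A maximal member of the family of annihilators of multiples of [x] is prime. *)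
Lemma noetherian_prime_ann G x : noetherian A -> is_submod G -> ~ G x ->
  exists b, ~ G (b *: x) /\ is_prime (ann G (b *: x)).
Proof.
move=> hN hG hx.
pose T := {b : A | ~ G (b *: x)}.
have t0 : T by exists 1; rewrite scale1r.
have [[b hb] hmax] := noetherian_maximal hN (K := fun t : T => ann G (sval t *: x))
  (fun t => ann_ideal _ hG) t0.
rewrite /= in hmax.
exists b; split => //; split; first exact: ann_ideal.
split; first by rewrite /ann scale1r.
move=> a c hac; case: (classic (ann G (b *: x) a)) => ha; [by left | right].
have hab : ~ G ((a * b) *: x) by rewrite -scalerA.
apply: (hmax (exist _ (a * b) hab)) => [d|]; rewrite /= !annZ.
  by move=> hd; rewrite mulrCA -annZ; apply: is_submodZ.
by rewrite mulrCA mulrA -annZ.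
Qed.

End Submodules.

Section FinitePrimes.
Variable A : comNzRingType.
Implicit Types S : (A -> Prop) -> Prop.

Lemma finite_primesS S' S : finite_primes S' -> (forall P, S P -> S' P) -> finite_primes S.
Proof. by move=> [n [L hL]] h; exists n, L => P /h; apply: hL. Qed.

Lemma finite_primes0 S : (forall P, ~ S P) -> finite_primes S.
Proof. by move=> h; exists 0%N, (fun _ _ => True) => P /h. Qed.

Lemma finite_primes1 (Q : A -> Prop) : finite_primes (fun P => forall x, P x <-> Q x).
Proof. by exists 1%N, (fun _ => Q) => P hP; exists 0%N. Qed.

Lemma finite_primesU S1 S2 : finite_primes S1 -> finite_primes S2 ->
  finite_primes (fun P => S1 P \/ S2 P).
Proof.
move=> [n1 [L1 h1]] [n2 [L2 h2]].
exists (n1 + n2)%N, (fun i => if (i < n1)%N then L1 i else L2 (i - n1)%N).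
move=> P [/h1 [i [hi hP]]|/h2 [i [hi hP]]].
  by exists i; rewrite hi ltn_addr.
by exists (n1 + i)%N; rewrite ltn_add2l hi ltnNge leq_addr /= addKn.
Qed.

Lemma finite_primesE S : finite_primes S ->
  exists n (L : 'I_n -> A -> Prop), forall P, S P -> exists i, P = L i.
Proof.
move=> [n [L hL]]; exists n, (fun i : 'I_n => L i) => P /hL [i [hi hP]].
exists (Ordinal hi); apply: functional_extensionality => x.
exact: propositional_extensionality.
Qed.

End FinitePrimes.

Section AssociatedPrimes.
Variable A : comNzRingType.

Definition ass_in (M : lmodType A) (F H : M -> Prop) (P : A -> Prop) : Prop :=
  is_prime P /\ exists y, H y /\ forall a, ann F y a <-> P a.

Definition addspan (M : lmodType A) (F : M -> Prop) (y z : M) : Prop :=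
  exists f r, F f /\ z = f + r *: y.

Section Module.
Variable M : lmodType A.
Implicit Types (F G H : M -> Prop) (y : M).

Lemma addspan_submod F y : is_submod F -> is_submod (addspan F y).
Proof.
move=> hF; split; first by exists 0, 0; rewrite scale0r addr0; split; first exact: is_submod0.
split=> [z z' [f [r [hf ->]]] [f' [r' [hf' ->]]]|a z [f [r [hf ->]]]].
  exists (f + f'), (r + r'); split; first exact: is_submodD.
  by rewrite scalerDl addrACA.
exists (a *: f), (a * r); split; first exact: is_submodZ.
by rewrite scalerDr scalerA.
Qed.

Lemma sub_addspan F y z : F z -> addspan F y z.
Proof. by move=> hz; exists z, 0; rewrite scale0r addr0. Qed.

Lemma addspan_gen F y : is_submod F -> addspan F y y.
Proof. by move=> hF; exists 0, 1; rewrite scale1r add0r; split; first exact: is_submod0. Qed.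

Lemma ass_in_split F G H P : (forall x, F x -> G x) ->
  ass_in F H P -> ass_in F G P \/ ass_in G H P.
Proof.
move=> hFG [hP [y [hy hA]]].
case: (classic (exists b, G (b *: y) /\ ~ F (b *: y))) => [[b [hGb hFb]]|hno].
  left; split => //; exists (b *: y); split => // a; rewrite annZ; split.
    by move/hA/(proj2 (proj2 hP)) => [//|/hA].
  by move=> ha; apply/(hA (a * b)); apply: is_idealMr (proj1 hP) ha.
right; split => //; exists y; split => // a; split; last by move/hA/hFG.
by move=> hG; apply/hA; apply: NNPP => hF; apply: hno; exists a.
Qed.

(* If [z = f + r y] then [a z] lies in [F] iff [a r] annihilates [y] modulo [F]. *)
Lemma ass_in_addspan F y P : is_submod F ->
  ass_in F (addspan F y) P -> ass_in (M := A^o) (ann F y) (fun _ => True) P.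
Proof.
move=> hF [hP [_ [[f [r [hf ->]]] hA]]]; split => //; exists r; split => // a.
rewrite -hA /ann scalerDr scalerA; split=> h.
  by apply: is_submodD => //; apply: is_submodZ.
by have := is_submodB hF h (is_submodZ a hF hf); rewrite addrAC subrr add0r.
Qed.

End Module.

Lemma ideal_submod (I : A -> Prop) : is_ideal I <-> is_submod (E := A^o) I.
Proof. by []. Qed.

Lemma ass_in_prime (Q P : A -> Prop) : is_prime Q ->
  ass_in (M := A^o) Q (fun _ => True) P -> forall x, P x <-> Q x.
Proof.
move=> hQ [hP [y [_ hA]]] x.
have hy : ~ Q y by move=> hy; apply: (prime_notin1 hP); apply/hA; rewrite /ann scale1r.
rewrite -hA /ann; change (Q (x * y) <-> Q x).
split=> [|hx]; last exact: (@is_idealMr A Q y x (proj1 hQ) hx).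
by case/(proj2 (proj2 hQ)).
Qed.

(* A maximal counterexample I0 is impossible: if Q = ann(y0) modulo I0 is prime, then
   Ass(A/I0) is contained in {Q} ∪ Ass(A/(I0 + A y0)). *)
Lemma finite_ass_ideal (I : A -> Prop) : noetherian A -> is_ideal I ->
  finite_primes (ass_in (M := A^o) I (fun _ => True)).
Proof.
move=> hN hI; apply: NNPP => hnf.
pose T := {I : A -> Prop | is_ideal I /\ ~ finite_primes (ass_in (M := A^o) I (fun _ => True))}.
have [[I0 [hI0 hnf0]] hmax] :=
  noetherian_maximal hN (K := fun t : T => sval t) (fun t => (svalP t).1) (exist _ I (conj hI hnf)).
rewrite /= in hmax.
have hI01 : ~ I0 1.
  move=> h1; apply: hnf0; apply: finite_primes0 => P [hP [y [_ hA]]].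
  apply: (prime_notin1 hP); apply/hA; rewrite /ann scale1r.
  by have := @is_idealM A I0 y 1 hI0 h1; rewrite mulr1.
have [b [hb hQ]] := noetherian_prime_ann (M := A^o) (G := I0) (x := 1) hN hI0 hI01.
pose J := addspan (M := A^o) I0 (b *: 1).
have hJ : is_ideal J by apply/ideal_submod; apply: addspan_submod.
have hJfin : finite_primes (ass_in (M := A^o) J (fun _ => True)).
  apply: NNPP => hJnf; apply: hb.
  apply: (hmax (exist _ J (conj hJ hJnf))) => [x|] /=; first exact: sub_addspan.
  exact: addspan_gen.
have hU := finite_primesU (finite_primes1 (ann (M := A^o) I0 (b *: 1))) hJfin.
apply: hnf0; apply: (@finite_primesS A _ _ hU) => P.
case/(ass_in_split (@sub_addspan (A^o) I0 (b *: 1))); last by right.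
by move/(ass_in_addspan (M := A^o) hI0) => hP; left; apply: ass_in_prime hQ hP.
Qed.

Section FinGen.
Variable M : lmodType A.
Implicit Types (F : M -> Prop) (s : seq M).

Fixpoint addspans F s : M -> Prop :=
  if s is y :: s' then addspan (addspans F s') y else F.

Lemma addspans_submod F s : is_submod F -> is_submod (addspans F s).
Proof. by move=> hF; elim: s => //= y s IH; apply: addspan_submod. Qed.

Lemma sub_addspans F s x : F x -> addspans F s x.
Proof. by elim: s => //= y s IH /IH; apply: sub_addspan. Qed.

Lemma addspans_mem F s y : is_submod F -> y \in s -> addspans F s y.
Proof.
move=> hF; elim: s => //= y' s IH; rewrite in_cons => /orP [/eqP ->|/IH].
  exact/addspan_gen/addspans_submod.
exact: sub_addspan.
Qed.

Lemma finite_ass_addspans F s : noetherian A -> is_submod F ->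
  finite_primes (ass_in F (addspans F s)).
Proof.
move=> hN hF; elim: s => [|y s IH] /=.
  apply: finite_primes0 => P [hP [y [hy hA]]].
  by apply: (prime_notin1 hP); apply/hA; rewrite /ann scale1r.
have hU := finite_primesU IH (finite_ass_ideal hN (ann_ideal y (addspans_submod s hF))).
apply: (@finite_primesS A _ _ hU) => P.
case/(ass_in_split (@sub_addspans F s)) => [|]; first by left.
by move/(ass_in_addspan (addspans_submod s hF)); right.
Qed.

Lemma finite_assoc_quot F : noetherian A -> fin_gen M -> is_submod F ->
  finite_primes (assoc_quot F).
Proof.
move=> hN [n [g hg]] hF.
apply: (@finite_primesS A _ _ (finite_ass_addspans [seq g i | i <- enum 'I_n] hN hF)).
move=> P [hP [y hy]]; split => //; exists y; split => //.
have [c ->] := hg y; apply: is_submod_sum => [|i _]; first exact: addspans_submod.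
apply: is_submodZ; first exact: addspans_submod.
by apply: addspans_mem => //; apply: map_f; rewrite mem_enum.
Qed.

End FinGen.
End AssociatedPrimes.

Section Fractions.
Variables (A : comNzRingType) (E : lmodType A).
Implicit Types (p P : A -> Prop) (F : E -> Prop) (e : E).

Lemma fr_eqP p e s e' s' :
  fr_eq p e s e' s' <-> exists t, ~ p t /\ t *: (s' *: e) = t *: (s *: e').
Proof.
split=> [[t [ht h]]|[t [ht h]]]; exists t; split => //.
  by apply/subr0_eq; rewrite -scalerBr.
by rewrite scalerBr h subrr.
Qed.

Lemma fr_eq_of_eq p e s e' s' : is_prime p -> s' *: e = s *: e' -> fr_eq p e s e' s'.
Proof. by move=> hp h; apply/fr_eqP; exists 1; split; [apply: prime_notin1 | rewrite h]. Qed.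

Lemma common_denominator P n (G : 'I_n -> E -> Prop) (x : 'I_n -> E) :
  is_prime P -> (forall i, is_submod (G i)) ->
  (forall i, exists c, ~ P c /\ G i (c *: x i)) ->
  exists t, ~ P t /\ forall i, G i (t *: x i).
Proof.
move=> hP hG h.
pose c i := proj1_sig (constructive_indefinite_description _ (h i)).
have hc i : ~ P (c i) /\ G i (c i *: x i) :=
  proj2_sig (constructive_indefinite_description _ (h i)).
exists (\prod_(i < n) c i); split; first by apply: prime_notin_prod => // i _; apply: (hc i).1.
by move=> i; rewrite (bigD1 i) //= mulrC -scalerA; apply: is_submodZ (hc i).2.
Qed.

Lemma locP p F e s : is_prime p -> is_submod F ->
  loc p F e s <-> ~ p s /\ exists c, ~ p c /\ F (c *: e).
Proof.
move=> hp hF; split=> [[hs [f [u [hf [hu /fr_eqP [w [hw h]]]]]]]|[hs [c [hc hce]]]].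
  split => //; exists (w * u); split; first exact: prime_notinM.
  by rewrite -scalerA h scalerA; apply: is_submodZ.
split => //; exists (c *: e), (c * s); do 2!split => //; first exact: prime_notinM.
by apply: fr_eq_of_eq => //; rewrite !scalerA mulrC.
Qed.

Lemma in_pApP p a t : is_prime p -> ~ p t -> in_pAp p a t <-> p a.
Proof.
move=> hp ht; split=> [[b [u [hb [hu [v [hv h]]]]]]|ha].
  have : p (v * (a * u)).
    have -> : v * (a * u) = v * (b * t) by apply/subr0_eq; rewrite -mulrBr.
    by apply: is_idealM (proj1 hp) _; apply: is_idealMr (proj1 hp) hb.
  by case/(proj2 (proj2 hp)) => [/hv []|/(proj2 (proj2 hp)) [//|/hu []]].
exists a, t; do 2!split => //; exists 1; split; first exact: prime_notin1.
by rewrite subrr mulr0.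
Qed.

Definition contr (J : E -> A -> Prop) e : Prop := J e 1.

Section LocalSubmodule.
Variables (p : A -> Prop) (J : E -> A -> Prop).
Hypotheses (hp : is_prime p) (hJ : is_locsub p J).

Lemma locsub_contr e s : J e s <-> ~ p s /\ contr J e.
Proof.
have [hden [hfr [_ [_ hZ]]]] := hJ; split=> [he|[hs he]].
  split; first exact: hden he.
  apply: hfr (hZ s 1 _ _ (prime_notin1 hp) he) (prime_notin1 hp) _.
  by apply: fr_eq_of_eq; rewrite // mul1r !scale1r.
apply: hfr (hZ 1 s _ _ hs he) hs _.
by apply: fr_eq_of_eq; rewrite // mulr1 !scale1r.
Qed.

Lemma contr_submod : is_submod (contr J).
Proof.
have [_ [_ [h0 [hD hZ]]]] := hJ; split; first exact: h0.
split=> [e e' he he'|a e he]; rewrite /contr.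
  by have := hD _ _ _ _ he he'; rewrite !scale1r mulr1.
by have := hZ a 1 _ _ (prime_notin1 hp) he; rewrite mulr1.
Qed.

Lemma contr_cancel t e : ~ p t -> contr J (t *: e) -> contr J e.
Proof.
move=> ht he; have [_ [hfr _]] := hJ.
have het : J (t *: e) t by apply/locsub_contr.
apply: hfr het (prime_notin1 hp) _.
by apply: fr_eq_of_eq; rewrite // scale1r.
Qed.

End LocalSubmodule.
End Fractions.

Section Realization.
Variables (A : comNzRingType) (E : lmodType A).
Variables (J : (A -> Prop) -> E -> A -> Prop) (F : E -> Prop).
Hypothesis hR : realizes J F.

Lemma realizesE p e s : is_prime p ->
  J p e s <-> ~ p s /\ exists c, ~ p c /\ F (c *: e).
Proof. by move=> hp; apply: iff_trans (iff_sym (hR.2 p hp e s)) (locP _ _ hp hR.1). Qed.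

Lemma realizes_consistency : consistency J.
Proof.
move=> p q hp hq hpq e s.
have npq x : ~ q x -> ~ p x by move=> hx /hpq.
split=> [/(realizesE _ _ hp) [hs [c [hc hce]]]|].
  split => //; exists (c *: e), 1, (s * c), 1; split.
    apply/(realizesE _ _ hq); split; first exact: prime_notin1.
    by exists 1; rewrite scale1r; split; first exact: prime_notin1.
  split; first exact: prime_notinM.
  split; first exact: prime_notin1.
  by apply: fr_eq_of_eq; rewrite // !scale1r !scalerA mul1r.
move=> [hs [e' [s' [t [u [/(realizesE _ _ hq) [hs' [c' [hc' hce']]] [ht [hu]]]]]]]].
move=> /fr_eqP [w [hw h]]; apply/(realizesE _ _ hp); split => //.
exists (w * s' * t * c'); split.
  exact: prime_notinM hp (prime_notinM hp (prime_notinM hp hw (npq _ hs')) ht) (npq _ hc').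
have -> : (w * s' * t * c') *: e = c' *: (w *: ((s' * t) *: e)).
  by rewrite !scalerA; congr (_ *: _); ring.
rewrite h; have -> : c' *: (w *: (s *: (u *: e'))) = (w * s * u) *: (c' *: e').
  by rewrite !scalerA; congr (_ *: _); ring.
exact: is_submodZ hR.1 hce'.
Qed.

Lemma assoc_quot_frakA P : assoc_quot F P -> frakA J P.
Proof.
move=> [hP [e he]]; split => //; exists e, 1; split; first exact: prime_notin1.
move=> a t ht; rewrite in_pApP //; split.
  move/(realizesE _ _ hP) => [_ [c [hc]]]; rewrite scalerA.
  by move=> /he /(proj2 (proj2 hP)) [/hc|].
move=> ha; apply/(realizesE _ _ hP); rewrite mulr1; split => //.
by exists 1; rewrite scale1r; split; [apply: prime_notin1 | apply/he].
Qed.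

Lemma frakA_assoc_quot P : noetherian A -> frakA J P -> assoc_quot F P.
Proof.
move=> hN [hP [e [s [hs hloc]]]]; split => //.
have [n [g hg]] := hN P (proj1 hP).
have hPloc a : P a -> exists c, ~ P c /\ F (c *: (a *: e)).
  move=> ha; have := (hloc a 1 (prime_notin1 hP)).2 (proj2 (in_pApP _ hP (prime_notin1 hP)) ha).
  by case/(realizesE _ _ hP) => _.
have [tau [htau hF']] := common_denominator (G := fun _ => F) (x := fun i => g i *: e)
  hP (fun _ => hR.1) (fun i => hPloc _ (is_ideal_gen hg i)).
exists (tau *: e) => a; split=> [ha|/hg [c ->]].
  have hJ : J P ((a * tau) *: e) (1 * s).
    apply/(realizesE _ _ hP); rewrite mul1r; split => //.
    by exists 1; rewrite scale1r -scalerA; split; first exact: prime_notin1.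
  move: ((hloc (a * tau) 1 (prime_notin1 hP)).1 hJ).
  by move/(in_pApP _ hP (prime_notin1 hP))/(proj2 (proj2 hP)) => [|/htau].
rewrite scaler_suml; apply: is_submod_sum (hR.1) _ => i _.
by rewrite scalerA mulrAC -!scalerA; apply: is_submodZ (hR.1) (hF' i).
Qed.

Lemma realizes_sub F' : noetherian A -> realizes J F' -> forall x, F x -> F' x.
Proof.
move=> hN hR' x hx; apply: NNPP => hnx.
have [b [hb hQ]] := noetherian_prime_ann hN hR'.1 hnx.
have : J (ann F' (b *: x)) (b *: x) 1.
  apply/(realizesE _ _ hQ); split; first exact: prime_notin1.
  by exists 1; rewrite scale1r; split; [apply: prime_notin1 | apply: is_submodZ hR.1 hx].
move/(hR'.2 _ hQ (b *: x) 1)/(locP _ _ hQ hR'.1) => [_ [c [hc]]].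
exact: hc.
Qed.

Lemma realizes_finite : noetherian A -> fin_gen E -> finite_primes (frakA J).
Proof.
move=> hN hfg; apply: (@finite_primesS A _ _ (finite_assoc_quot hN hfg hR.1)).
by move=> P; apply: frakA_assoc_quot.
Qed.

End Realization.

Section Saturation.
Variables (A : comNzRingType) (M : lmodType A).

(* The ideals ann(c^k e) increase; at a stable index k, if c^k e were outside G, a prime
   annihilator of some b c^k e would contain c, so b would kill c^(k+1) e but not c^k e. *)
Lemma ann_prime_power G (e : M) c : noetherian A -> is_submod G ->
  (forall b, is_prime (ann G (b *: e)) -> ann G (b *: e) c) ->
  exists k, G (c ^+ k *: e).
Proof.
move=> hN hG hc.
have hinc k x : ann G (c ^+ k *: e) x -> ann G (c ^+ k.+1 *: e) x.
  by move=> h; rewrite exprS -scalerA annZ; exact: (is_idealMr c (ann_ideal _ hG) h).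
have [k hk] := noetherian_acc hN (fun k => ann_ideal (c ^+ k *: e) hG) hinc.
exists k; apply: NNPP => hn.
have [b [hb hQ]] := noetherian_prime_ann hN hG hn.
rewrite scalerA in hQ; apply: hb; apply: hk.
by have := hc _ hQ; rewrite /ann !scalerA exprS mulrCA.
Qed.

Lemma loc_mem_of_ass G (e : M) p S : noetherian A -> is_submod G -> is_prime p ->
  finite_primes S ->
  (forall b, is_prime (ann G (b *: e)) ->
     S (ann G (b *: e)) /\ ~ (forall a, ann G (b *: e) a -> p a)) ->
  exists t, ~ p t /\ G (t *: e).
Proof.
move=> hN hG hp hS hass.
have [n [L hL]] := finite_primesE hS.
have [c [hc hcL]] := common_notin_prime L hp.
have [k hk] : exists k, G (c ^+ k *: e).
  apply: ann_prime_power hN hG _ => b hb; have [hSb hnot] := hass b hb.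
  have [i hi] := hL _ hSb; rewrite hi in hnot *; apply: hcL hnot.
  by rewrite -hi; case: hb.
by exists (c ^+ k); split; first exact: prime_notinX.
Qed.

End Saturation.

Section Glueing.
Variables (A : comNzRingType) (E : lmodType A) (J : (A -> Prop) -> E -> A -> Prop).
Hypothesis hJ : forall p, is_prime p -> is_locsub p (J p).
Hypothesis hC : consistency J.

Let contrJ_submod q : is_prime q -> is_submod (contr (J q)).
Proof. by move=> hq; apply: contr_submod (hJ hq). Qed.

Lemma contr_saturate Q q y : is_prime Q -> is_prime q -> (forall x, Q x -> q x) ->
  contr (J Q) y <-> exists c, ~ Q c /\ contr (J q) (c *: y).
Proof.
move=> hQ hq hQq; split.
  move/(hC hQ hq hQq y 1) => [_ [e' [s' [t [u [he' [ht [hu /fr_eqP [w [hw h]]]]]]]]]].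
  exists (w * t); split; first exact: prime_notinM.
  have [hs' he'1] := (locsub_contr hq (hJ hq) e' s').1 he'.
  apply: (contr_cancel hq (hJ hq) hs').
  have -> : s' *: ((w * t) *: y) = w *: ((s' * t) *: y).
    by rewrite !scalerA; congr (_ *: _); ring.
  by rewrite h scale1r scalerA; apply: is_submodZ (contrJ_submod hq) he'1.
move=> [c [hc h]]; apply/(hC hQ hq hQq y 1); split; first exact: prime_notin1.
exists (c *: y), 1, c, 1; do 2!split => //; split; first exact: prime_notin1.
by apply: fr_eq_of_eq; rewrite // !scale1r mul1r.
Qed.

Lemma prime_ann_frakA q y : is_prime q -> is_prime (ann (contr (J q)) y) ->
  frakA J (ann (contr (J q)) y) /\ (forall x, ann (contr (J q)) y x -> q x) /\
  ~ contr (J (ann (contr (J q)) y)) y.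
Proof.
set Q := ann (contr (J q)) y => hq hQ.
have hQq x : Q x -> q x.
  move=> hx; apply: NNPP => hnx; apply: (prime_notin1 hQ).
  by rewrite /Q /ann scale1r; exact: (contr_cancel hq (hJ hq) hnx hx).
have hsat := contr_saturate _ hQ hq hQq.
split; last by split => // /hsat [c [hc]]; apply: hc.
split => //; exists y, 1; split; first exact: prime_notin1.
move=> a t ht; rewrite in_pApP // mulr1; split.
  move/(locsub_contr hQ (hJ hQ)) => [_ /hsat [c [hc]]].
  by rewrite scalerA => /(proj2 (proj2 hQ)) [/hc|].
move=> ha; apply/(locsub_contr hQ (hJ hQ)); split => //; apply/hsat.
by exists 1; rewrite scale1r; split; first exact: prime_notin1.
Qed.

Hypothesis hN : noetherian A.

Lemma exists_frakA_below q z : is_prime q -> ~ contr (J q) z ->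
  exists Q, frakA J Q /\ (forall x, Q x -> q x) /\ ~ contr (J Q) z.
Proof.
move=> hq hz.
have [b [hb hP]] := noetherian_prime_ann hN (contrJ_submod hq) hz.
have [hA [hsub hnot]] := prime_ann_frakA hq hP.
exists (ann (contr (J q)) (b *: z)); do 2!split => //.
by move=> h; apply: hnot; apply: (is_submodZ b (contrJ_submod (proj1 hA)) h).
Qed.

Hypothesis hfin : finite_primes (frakA J).

Lemma contr_lift p e : is_prime p -> contr (J p) e ->
  exists t, ~ p t /\ forall q, is_prime q -> contr (J q) (t *: e).
Proof.
move=> hp he; have [n [L hL]] := finite_primesE hfin.
have hGs i : is_submod (fun z => frakA J (L i) -> contr (J (L i)) z).
  by apply: is_submod_impl => hAi; apply: contrJ_submod (proj1 hAi).
have hloc i : exists c, ~ p c /\ (frakA J (L i) -> contr (J (L i)) (c *: e)).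
  case: (classic (frakA J (L i))) => hAi; last by exists 1; split; first exact: prime_notin1.
  have hPi := proj1 hAi.
  have [|t [ht hte]] :=
    loc_mem_of_ass (e := e) hN (contrJ_submod hPi) hp hfin; last by exists t.
  move=> b hb; have [hfr [_ hnot]] := prime_ann_frakA hPi hb; split => // hsub; apply: hnot.
  apply: (is_submodZ b (contrJ_submod (proj1 hfr))).
  apply/(contr_saturate _ (proj1 hfr) hp hsub).
  by exists 1; rewrite scale1r; split; first exact: prime_notin1.
have [tau [htau hall]] := common_denominator (x := fun _ => e) hp hGs hloc.
exists tau; split => // q hq; apply: NNPP => hnq.
have [Q [hQA [_ hnQ]]] := exists_frakA_below hq hnq.
have [j hj] := hL Q hQA; rewrite hj in hQA hnQ.
exact: hnQ (hall j hQA).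
Qed.

Definition glue (z : E) : Prop := forall q, is_prime q -> contr (J q) z.

Lemma glue_realizes : realizes J glue.
Proof.
have hF : is_submod glue by apply: is_submod_bigcap => q hq; exact: contrJ_submod.
split => // p hp e s; rewrite locP //; split.
  move=> [hs [c [hc hce]]]; apply/(locsub_contr hp (hJ hp)); split => //.
  exact: (contr_cancel hp (hJ hp) hc (hce p hp)).
move/(locsub_contr hp (hJ hp)) => [hs he].
by have [t [ht hte]] := contr_lift hp he; split => //; exists t.
Qed.

End Glueing.

Theorem lemma3 (A : comNzRingType) (E : lmodType A)
  (J : (A -> Prop) -> E -> A -> Prop) :
  noetherian A -> fin_gen E ->
  (forall p, is_prime p -> is_locsub p (J p)) ->
  ((exists F : E -> Prop, realizes J F) <->
     (consistency J /\ finite_primes (frakA J))) /\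
  (forall F : E -> Prop, realizes J F ->
     (forall F' : E -> Prop, realizes J F' -> forall x, F x <-> F' x) /\
     (forall P : A -> Prop, assoc_quot F P <-> frakA J P)).
Proof.
move=> hN hfg hJ; split.
  split=> [[F hR]|[hC hfin]]; last by exists (glue J); apply: glue_realizes.
  by split; [apply: realizes_consistency hR | apply: realizes_finite hR hN hfg].
move=> F hR; split=> [F' hR' x|P].
  by split; [apply: (realizes_sub hR hN hR') | apply: (realizes_sub hR' hN hR)].
by split; [apply: (assoc_quot_frakA hR) | apply: (frakA_assoc_quot hR hN)].
Qed.
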